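(* Let a group $G$ act by combinatorial isometries without cube inversions on a $\mathrm{CAT}(0)$ cube complex $Z$, and let $c\colon Z\to Y$ be the collapse of a strongly collapsible $G$-invariant family $\mathfrak{H}$ of hyperplanes consisting of finitely many, say $n$, $G$-orbits of hyperplanes. Then for all vertices $z_1,z_2$ of $Z$, \[\frac{d_Z(z_1,z_2)-n}{n+1}\le d_Y(c(z_1),c(z_2))\le d_Z(z_1,z_2).\] In particular, preimages of vertices of $Y$ under $c$ have diameter at most $n$. (No cocompactness is assumed.)
   Context: $d_Z$, $d_Y$ denote the combinatorial metrics (graph metrics of the 1-skeleta). Hyperplanes of a $\mathrm{CAT}(0)$ cube complex are equivalence classes of edges under the relation generated by ''being opposite edges of a square''; each has two halfspaces and a carrier (union of closed cubes containing a dual edge). $\mathrm{Sep}(A\mid B)$ is the set of hyperplanes with $A$ in one halfspace and $B$ in the other (a hyperplane standing for its carrier). A cube inversion is an isometry stabilizing a cube without fixing it pointwise. A $G$-invariant family $\mathfrak{H}$ is strongly collapsible if for every $H\in\mathfrak{H}$ and $g\in G\setminus\mathrm{Stab}(H)$, $\mathrm{Sep}(H\mid gH)\not\subseteq\mathfrak{H}$. The collapse of $\mathfrak{H}$ (with $\mathfrak{W}$ the set of all hyperplanes) is the map $c\colon Z\to Y$ where $Y$ has as vertices the choices of one halfspace for each hyperplane of $\mathfrak{W}\setminus\mathfrak{H}$, pairwise intersecting and each containing any given vertex of $Z$ for all but finitely many hyperplanes, $2^k$ vertices spanning a $k$-cube iff they differ exactly on $k$ hyperplanes and realize all choices there; $c$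 maps a vertex to the halfspaces containing it and is affine on cubes. *)

From HB Require Import structures.
From mathcomp Require Import all_boot all_order all_algebra.
From Stdlib Require Import Relation_Operators.
From Stdlib Require List.
Set Implicit Arguments. Unset Strict Implicit. Unset Printing Implicit Defensive.

Section Graphs.
Variable V : Type.

Inductive walk (e : V -> V -> Prop) : V -> V -> nat -> Prop :=
| walk0 x : walk e x x 0
| walkS x y z k : e x y -> walk e y z k -> walk e x z k.+1.

Definition gdist (e : V -> V -> Prop) (x y : V) (d : nat) : Prop :=
  walk e x y d /\ forall m, walk e x y m -> d <= m.

Definition between (e : V -> V -> Prop) (x m y : V) : Prop :=
  forall a b c, gdist e x m a -> gdist e m y b -> gdist e x y c -> a + b = c.

(* Median graphs = 1-skeleta of CAT(0) cube complexes (Chepoi, Roller). *)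
Definition median_graph (adj : V -> V -> Prop) : Prop :=
  [/\ (forall x y, adj x y -> adj y x),
      (forall x, ~ adj x x),
      (forall x y, exists d, walk adj x y d) &
      (forall x y z, exists m,
         [/\ between adj x m y, between adj y m z, between adj x m z &
             forall m', between adj x m' y -> between adj y m' z ->
                        between adj x m' z -> m' = m])].

Variable adj : V -> V -> Prop.

Definition cube (S : V -> Prop) : Prop :=
  exists k (phi : {ffun 'I_k -> bool} -> V),
    [/\ injective phi,
        (forall v, S v <-> exists a, phi a = v) &
        (forall a b, adj (phi a) (phi b) <-> #|[set i | a i != b i]| = 1)].

(* Generating relation on (oriented) edges: opposite edges of a square, and
   reversal of orientation (so that hyperplanes are classes of unoriented
   edges). *)
Definition edge_gen (e f : V * V) : Prop :=
  let: (x, y) := e in let: (x', y') := f in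
  (adj x y /\ adj y y' /\ adj y' x' /\ adj x' x /\ x <> y' /\ y <> x')
  \/ (adj x y /\ x' = y /\ y' = x).

Definition hyperplane (H : V -> V -> Prop) : Prop :=
  exists x0 y0, adj x0 y0 /\
    H = (fun x y => clos_refl_sym_trans (V * V) edge_gen (x0, y0) (x, y)).

(* x and y lie in the same halfspace of H: joined by a walk crossing no
   edge of H.  A halfspace of H is a class  sameside H x. *)
Definition sameside (H : V -> V -> Prop) (x y : V) : Prop :=
  exists k, walk (fun a b => adj a b /\ ~ H a b) x y k.

Definition carrier (H : V -> V -> Prop) (v : V) : Prop :=
  exists S, [/\ cube S, S v & exists x y, [/\ S x, S y & H x y]].

Definition Sep (A B K : V -> V -> Prop) : Prop :=
  hyperplane K /\
  exists x y, [/\ ~ sameside K x y,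
                  (forall a, carrier A a -> sameside K x a) &
                  (forall b, carrier B b -> sameside K y b)].

Variable HH : (V -> V -> Prop) -> Prop.

Definition kept (K : V -> V -> Prop) : Prop := hyperplane K /\ ~ HH K.

(* Vertices of Y: a choice of a halfspace for each hyperplane not in HH
   (and the empty set for everything else), pairwise intersecting, and
   containing any given vertex of Z for all but finitely many hyperplanes. *)
Definition Yvert (s : (V -> V -> Prop) -> V -> Prop) : Prop :=
  [/\ (forall K, ~ kept K -> s K = (fun _ => False)),
      (forall K, kept K -> exists x, s K = sameside K x),
      (forall K K', kept K -> kept K' -> exists y, s K y /\ s K' y) &
      (forall z, exists l : list (V -> V -> Prop),
          forall K, kept K -> ~ s K z -> List.In K l)].

Definition Yadj (s t : (V -> V -> Prop) -> V -> Prop) : Prop :=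
  [/\ Yvert s, Yvert t &
      exists K0, [/\ kept K0, s K0 <> t K0 & forall K, K <> K0 -> s K = t K]].

Definition collapse (z : V) : (V -> V -> Prop) -> V -> Prop :=
  fun K y => kept K /\ sameside K z y.

End Graphs.

Record group := Group {
  gcar :> Type;
  gmul : gcar -> gcar -> gcar;
  gone : gcar;
  ginv : gcar -> gcar;
  gmulA : forall x y z, gmul x (gmul y z) = gmul (gmul x y) z;
  gmul1 : forall x, gmul gone x = x;
  gmulV : forall x, gmul (ginv x) x = gone }.

Section Action.
Variables (V : Type) (adj : V -> V -> Prop) (G : group) (act : G -> V -> V).

Definition is_action : Prop :=
  (forall x, act (gone G) x = x) /\
  (forall g h x, act (gmul g h) x = act g (act h x)).

(* action by combinatorial isometries = graph automorphisms of the 1-skeleton *)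
Definition by_isometries : Prop :=
  forall g x y, adj x y <-> adj (act g x) (act g y).

Definition no_cube_inversions : Prop :=
  forall g (S : V -> Prop), cube adj S -> (forall v, S v <-> S (act g v)) ->
    forall v, S v -> act g v = v.

Definition htrans (g : G) (H : V -> V -> Prop) : V -> V -> Prop :=
  fun x y => H (act (ginv g) x) (act (ginv g) y).

Variable HH : (V -> V -> Prop) -> Prop.

Definition G_invariant : Prop := forall g H, HH H -> HH (htrans g H).

Definition strongly_collapsible : Prop :=
  forall H g, HH H -> htrans g H <> H ->
    ~ (forall K, Sep adj H (htrans g H) K -> HH K).

Definition n_orbits (n : nat) : Prop :=
  exists reps : 'I_n -> (V -> V -> Prop),
    [/\ (forall i, HH (reps i)),
        (forall i j g, htrans g (reps i) = reps j -> i = j) &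
        (forall H, HH H -> exists i g, H = htrans g (reps i))].
End Action.

(* Take a geodesic z1 = v_0, ..., v_d = z2 in Z.  The hyperplanes H_l dual to its
   edges are pairwise distinct and all separate z1 from z2, so every kept H_l (one
   not in HH) is a coordinate in which c(z1) and c(z2) differ; as an edge of Y
   changes a single coordinate, d_Y(c z1, c z2) is at least the number of kept H_l.
   A run of consecutive collapsed hyperplanes H_i, ..., H_j contains no two
   hyperplanes H, gH of one orbit: every hyperplane of Sep(H | gH) is crossed by
   the geodesic between them, hence collapsed, against strong collapsibility.  So
   runs have length at most n, and d_Z <= n + (n + 1) d_Y.  Conversely an edge of
   Z is mapped to an edge or a vertex of Y, whence d_Y <= d_Z.

   Hyperplanes are handled through the Djokovic-Winkler halfspaces
   W(a|b) = {w | d(w, a) < d(w, b)}: square-equivalent edges cut out the same pair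
   of halfspaces, and every edge leaving W(a|b) is square-equivalent to ab. *)

From HB Require Import structures.
From mathcomp Require Import all_boot all_order all_algebra.
From mathcomp Require Import zify lra boolp.
From Stdlib Require Import Relation_Operators.
From Stdlib Require List.
Import Order.TTheory GRing.Theory Num.Theory.
Set Implicit Arguments. Unset Strict Implicit. Unset Printing Implicit Defensive.

Section Walks.
Variables (V : Type) (e : V -> V -> Prop).

Lemma walk_cat x y z k l : walk e x y k -> walk e y z l -> walk e x z (k + l).
Proof. elim=> [//|a b c k' h _ IH] w; rewrite addSn; exact: walkS h (IH w). Qed.

Lemma walk_rcons x y z k : walk e x y k -> e y z -> walk e x z k.+1.
Proof. move=> w h; rewrite -addn1; exact: walk_cat w (walkS h (walk0 _ _)). Qed.

Lemma walk_rev x y k : (forall a b, e a b -> e b a) -> walk e x y k -> walk e y x k.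
Proof.
move=> e_sym; elim=> [a|a b c k' h _ IH]; first exact: walk0.
exact: walk_rcons IH (e_sym _ _ h).
Qed.

Lemma walk0_eq x y : walk e x y 0 -> x = y.
Proof. by move=> w; inversion w. Qed.

Lemma walkS_inv x y k : walk e x y k.+1 -> exists2 x', e x x' & walk e x' y k.
Proof. by move=> w; inversion w; subst; exists y0. Qed.

Lemma gdist_exists x y k : walk e x y k -> exists d, gdist e x y d.
Proof.
move=> w; have ex : exists k, `[< walk e x y k >] by exists k; apply/asboolP.
case: (ex_minnP ex) => d /asboolP wd min_d.
by exists d; split=> // m /asboolP /min_d.
Qed.

Lemma gdist_uniq x y a b : gdist e x y a -> gdist e x y b -> a = b.
Proof. by move=> [wa ha] [wb hb]; apply/eqP; rewrite eqn_leq ha ?hb. Qed.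

Lemma walk_vertices x y k : walk e x y k ->
  exists v : nat -> V, [/\ v 0 = x, v k = y & forall i, i < k -> e (v i) (v i.+1)].
Proof.
elim=> [a|a b c k' h _ [v [v0 vk hv]]]; first by exists (fun _ => a).
exists (fun i => if i is j.+1 then v j else a); split => //.
by case=> [|i] /= lt; [rewrite v0 | apply: hv].
Qed.

Lemma vertices_walk (v : nat -> V) k : (forall i, i < k -> e (v i) (v i.+1)) ->
  forall i j, i <= j <= k -> walk e (v i) (v j) (j - i).
Proof.
move=> hv i; elim=> [|j IH] /andP[ij jk].
  have -> : i = 0 by lia.
  exact: walk0.
case: (ltngtP i j.+1) ij => // [lt|->] _; last by rewrite subnn; exact: walk0.
rewrite subSn; last by lia.
apply: walk_rcons (IH _) (hv _ _); lia.
Qed.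

Lemma walk_exit (W : pred V) x y k : walk e x y k -> W x -> ~~ W y ->
  exists u w, [/\ e u w, W u & ~~ W w].
Proof.
elim=> [a -> //|a b c k' ab _ IH] Wa Wc.
case Wb: (W b); first exact: IH.
by exists a, b; rewrite Wb.
Qed.

End Walks.

Section MedianDistance.
Variables (V : Type) (adj : V -> V -> Prop).
Hypothesis Hmg : median_graph adj.

Lemma adj_sym x y : adj x y -> adj y x.
Proof. by case: Hmg => h _ _ _; apply: h. Qed.

Lemma adj_irr x : ~ adj x x.
Proof. by case: Hmg => _ h _ _; apply: h. Qed.

Lemma connected_walk x y : exists k, `[< walk adj x y k >].
Proof. by case: Hmg => _ _ /(_ x y) [k w] _; exists k; apply/asboolP. Qed.

Definition dist x y : nat := ex_minn (connected_walk x y).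

Lemma dist_walk x y : walk adj x y (dist x y).
Proof. by rewrite /dist; case: ex_minnP => d /asboolP. Qed.

Lemma dist_min x y k : walk adj x y k -> dist x y <= k.
Proof. by rewrite /dist; case: ex_minnP => d _ min_d /asboolP /min_d. Qed.

Lemma dist_gdist x y : gdist adj x y (dist x y).
Proof. by split; [apply: dist_walk | apply: dist_min]. Qed.

Lemma gdist_dist x y k : gdist adj x y k -> k = dist x y.
Proof. by move=> g; apply: gdist_uniq g (dist_gdist x y). Qed.

Lemma distC x y : dist x y = dist y x.
Proof.
by apply/eqP; rewrite eqn_leq !dist_min //; apply: walk_rev adj_sym (dist_walk _ _).
Qed.

Lemma dist_triangle x y z : dist x z <= dist x y + dist y z.
Proof. exact/dist_min/walk_cat/dist_walk/dist_walk. Qed.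

Lemma dist_eq0 x y : dist x y = 0 -> x = y.
Proof. by move=> d0; have := dist_walk x y; rewrite d0; apply: walk0_eq. Qed.

Lemma dist_adj x y : adj x y -> dist x y = 1.
Proof.
move=> xy; apply/eqP; rewrite eqn_leq dist_min; last exact: walkS xy (walk0 _ _).
by rewrite lt0n; apply/eqP => /dist_eq0 exy; subst; apply: adj_irr xy.
Qed.

Lemma dist_step x y k : dist x y = k.+1 -> exists2 x', adj x x' & dist x' y = k.
Proof.
move=> dxy; have w := dist_walk x y; rewrite dxy in w.
have [x' xx' {}w] := walkS_inv w.
exists x' => //; have := dist_min w; have := dist_triangle x x' y.
rewrite dxy (dist_adj xx'); lia.
Qed.

Lemma dist1_adj x y : dist x y = 1 -> adj x y.
Proof. by move=> /dist_step [y' xy' /dist_eq0 <-]. Qed.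

Lemma dist_adj_le x y z : adj y z -> dist x z <= (dist x y).+1.
Proof. move=> yz; have := dist_triangle x y z; rewrite (dist_adj yz); lia. Qed.

Lemma dist_between x m y : between adj x m y <-> dist x m + dist m y = dist x y.
Proof.
split=> [|h a b c ga gb gc]; first by apply; apply: dist_gdist.
by rewrite (gdist_dist ga) (gdist_dist gb) (gdist_dist gc).
Qed.

Definition median_of x y z m :=
  [/\ dist x m + dist m y = dist x y, dist y m + dist m z = dist y z &
      dist x m + dist m z = dist x z].

Lemma median_exists x y z : exists m, median_of x y z m.
Proof.
case: Hmg => _ _ _ /(_ x y z) [m [h1 h2 h3 _]].
by exists m; split; apply/dist_between.
Qed.

Lemma median_uniq x y z m m' : median_of x y z m -> median_of x y z m' -> m = m'.
Proof.
move=> hm hm'; case: Hmg => _ _ _ /(_ x y z) [c [_ _ _ c_uniq]].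
have median_eq u : median_of x y z u -> u = c.
  by case=> h1 h2 h3; apply: c_uniq; apply/dist_between.
by rewrite (median_eq _ hm) (median_eq _ hm').
Qed.

Lemma adj_dist_neq x a b : adj a b -> dist x a != dist x b.
Proof.
move=> ab; have [m [h1 h2 h3]] := median_exists x a b.
rewrite (dist_adj ab) in h2.
have [/dist_eq0 am | /dist_eq0 mb] : dist a m = 0 \/ dist m b = 0 by lia.
- by subst m; rewrite (dist_adj ab) in h3; lia.
- by subst m; rewrite (dist_adj (adj_sym ab)) in h1; lia.
Qed.

Lemma adj_dist_succ x a b : adj a b ->
  dist x b = (dist x a).+1 \/ dist x a = (dist x b).+1.
Proof.
move=> ab; have := adj_dist_neq x ab; have := dist_adj_le x ab.
have := dist_adj_le x (adj_sym ab); lia.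
Qed.

Lemma dist_eq2 p q c : adj p c -> adj c q -> p <> q -> ~ adj p q -> dist p q = 2.
Proof.
move=> pc cq pq npq; have := dist_triangle p c q; rewrite (dist_adj pc) (dist_adj cq).
have : dist p q <> 0 by move/dist_eq0.
have : dist p q <> 1 by move/dist1_adj.
lia.
Qed.

(* Both p and q would be medians of c1, c2 and c3. *)
Lemma no_K23 p q c1 c2 c3 : p <> q ->
  adj p c1 -> adj p c2 -> adj p c3 -> adj c1 q -> adj c2 q -> adj c3 q ->
  c1 <> c2 -> c2 <> c3 -> c1 <> c3 -> False.
Proof.
move=> pq p1 p2 p3 q1 q2 q3 n12 n23 n13.
have nadj c c' : adj p c -> adj p c' -> ~ adj c c'.
  by move=> pc pc' cc'; move: (adj_dist_neq p cc'); rewrite !dist_adj.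
have d12 := dist_eq2 (adj_sym p1) p2 n12 (nadj _ _ p1 p2).
have d23 := dist_eq2 (adj_sym p2) p3 n23 (nadj _ _ p2 p3).
have d13 := dist_eq2 (adj_sym p1) p3 n13 (nadj _ _ p1 p3).
have d1 := (dist_adj p1, dist_adj (adj_sym p1), dist_adj q1, dist_adj (adj_sym q1)).
have d2 := (dist_adj p2, dist_adj (adj_sym p2), dist_adj q2, dist_adj (adj_sym q2)).
have d3 := (dist_adj p3, dist_adj (adj_sym p3), dist_adj q3, dist_adj (adj_sym q3)).
by apply: pq; apply: (@median_uniq c1 c2 c3); split; rewrite ?d12 ?d23 ?d13 ?d1 ?d2 ?d3.
Qed.

End MedianDistance.

Section Hyperplanes.
Variables (V : Type) (adj : V -> V -> Prop).
Hypothesis Hmg : median_graph adj.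
Local Notation dist := (dist Hmg).
Local Notation adj_sym := (adj_sym Hmg).

Local Notation crst := (clos_refl_sym_trans (V * V) (edge_gen adj)).

Definition hp (a b : V) : V -> V -> Prop := fun x y => crst (a, b) (x, y).

Definition closer (e : V * V) (w : V) : bool := dist w e.1 < dist w e.2.

Lemma closer_rev a b w : adj a b -> closer (b, a) w = ~~ closer (a, b) w.
Proof. by move=> ab; rewrite /closer /=; have := adj_dist_succ Hmg w ab; case: ltngtP; lia. Qed.

Lemma closer_square x y y' x' w : adj x y -> adj y y' -> adj y' x' -> adj x' x ->
  x <> y' -> y <> x' -> closer (x, y) w -> closer (x', y') w.
Proof.
move=> xy yy' y'x' x'x nxy' nyx'; rewrite /closer /= => lt.
have := adj_dist_succ Hmg w xy; have := adj_dist_succ Hmg w x'x.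
have := adj_dist_succ Hmg w yy'; have := adj_dist_succ Hmg w y'x'.
move=> b1 b2 b3 b4; rewrite ltnNge; apply/negP => le.
have hy : dist w y = (dist w x).+1 by lia.
have hx' : dist w x' = (dist w x).+1 by lia.
have hy' : dist w y' = dist w x by lia.
(* Otherwise x and y' have a third common neighbour: the median of w, x, y'. *)
have nxy'_adj : ~ adj x y' by move=> a; move: (adj_dist_neq Hmg w a); rewrite hy' eqxx.
have d2 : dist x y' = 2 by apply: (dist_eq2 Hmg) xy yy' nxy' nxy'_adj.
have [m [h1 h2 h3]] := median_exists Hmg w x y'.
rewrite d2 hy' (distC Hmg m x) in h1 h2 h3.
have xm : adj x m by apply: dist1_adj; lia.
have my' : adj m y' by apply: dist1_adj; lia.
exfalso; apply: (no_K23 Hmg (p:=x) (q:=y') (c1:=y) (c2:=x') (c3:=m)) => //.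
- exact: adj_sym x'x.
- exact: adj_sym y'x'.
- by move=> e; subst; lia.
- by move=> e; subst; lia.
Qed.

Lemma edge_gen_adj e f : edge_gen adj e f -> adj e.1 e.2 /\ adj f.1 f.2.
Proof.
case: e f => [x y] [x' y'] /= [[xy [_ [y'x' _]]]|[xy [-> ->]]].
  by split=> //; apply: adj_sym.
by split=> //; apply: adj_sym.
Qed.

Definition same_cut (e f : V * V) : Prop :=
  closer e =1 closer f \/ closer e =1 (fun w => ~~ closer f w).

Lemma same_cut_sym e f : same_cut e f -> same_cut f e.
Proof. by case=> ef; [left | right] => w; rewrite ef ?negbK. Qed.

Lemma same_cut_trans e f g : same_cut e f -> same_cut f g -> same_cut e g.
Proof. by case=> ef [] fg; [left | right | right | left] => w; rewrite ef fg ?negbK. Qed.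

Lemma edge_gen_same_cut e f : edge_gen adj e f -> same_cut e f.
Proof.
case: e f => [x y] [x' y'] /= [[xy [yy' [y'x' [x'x [nxy' nyx']]]]]|[xy [-> ->]]].
  left=> w; apply/idP/idP; first exact: closer_square.
  by apply: closer_square; try exact: adj_sym; move/esym.
by right=> w; rewrite (closer_rev _ xy) negbK.
Qed.

Lemma crst_same_cut e f : crst e f -> same_cut e f.
Proof.
elim=> [{}e {}f /edge_gen_same_cut // | {}e | {}e {}f _ /same_cut_sym // | {}e {}f g _ ef _ fg].
- by left.
- exact: same_cut_trans ef fg.
Qed.

Lemma crst_adj e f : crst e f -> adj e.1 e.2 <-> adj f.1 f.2.
Proof. by elim=> [{}e {}f /edge_gen_adj [] | {}e | {}e {}f _ | {}e {}f g _ ef _ fg]; tauto. Qed.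

Lemma hp_adj a b x y : adj a b -> hp a b x y -> adj x y.
Proof. by move=> ab /crst_adj /= <-. Qed.

Lemma square_toward a b u u' w : adj a b -> adj u u' -> adj u w ->
  dist u' a < dist u a -> closer (a, b) u -> ~~ closer (a, b) w ->
  exists2 m, edge_gen adj (u', m) (u, w) & closer (a, b) u' && ~~ closer (a, b) m.
Proof.
rewrite /closer /= -leqNgt => ab uu' uw du Wu Ww.
have := adj_dist_succ Hmg u ab; have := adj_dist_succ Hmg w ab.
have := adj_dist_succ Hmg u' ab.
have := adj_dist_succ Hmg a uu'; have := adj_dist_succ Hmg b uu'.
have := adj_dist_succ Hmg a uw; have := adj_dist_succ Hmg b uw.
rewrite !(distC Hmg a) !(distC Hmg b) => uwb uwa uu'b uu'a u'ab wab uab.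
have nu'w : u' <> w by move=> e; subst; lia.
have nadj : ~ adj u' w.
  by move=> u'w; have := adj_dist_succ Hmg a u'w; rewrite !(distC Hmg a); lia.
(* The fourth corner m of the square on u', u, w is the median of u', w and b. *)
have d2 : dist u' w = 2 by apply: (dist_eq2 Hmg) (adj_sym uu') uw nu'w nadj.
have [m [h1 h2 h3]] := median_exists Hmg u' w b.
rewrite d2 (distC Hmg w m) in h1 h2 h3.
have u'm : adj u' m by apply: dist1_adj; lia.
have mw : adj m w by apply: dist1_adj; lia.
have := adj_dist_succ Hmg a mw; rewrite !(distC Hmg a) => mwa.
exists m; last by apply/andP; split; lia.
left; do 4 (split; first by [|apply: adj_sym]).
by split=> // e; subst; lia.
Qed.

(* Induction on d(u, a), moving the edge uw towards ab across squares. *)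
Lemma crossing_edge_hp a b u w : adj a b -> adj u w ->
  closer (a, b) u -> ~~ closer (a, b) w -> hp a b u w.
Proof.
move=> ab; move Eu: (dist u a) => k; elim: k u w Eu => [|k IH] u w du uw Wu Ww.
  have eua := dist_eq0 du; subst u.
  have := adj_dist_succ Hmg w ab; move: Ww.
  rewrite /closer /= (distC Hmg w a) (dist_adj Hmg uw) => Ww wab.
  have -> : w = b by apply: (dist_eq0 (Hmg := Hmg)); lia.
  exact: rst_refl.
have [u' uu' du'] := dist_step du.
have [m sq /andP[Wu' Wm]] := square_toward ab uu' uw ltac:(lia) Wu Ww.
apply: rst_trans (IH u' m du' (edge_gen_adj sq).1 Wu' Wm) _.
exact: rst_step.
Qed.

End Hyperplanes.

Section Collapse.
Variables (V : Type) (adj : V -> V -> Prop).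
Hypothesis Hmg : median_graph adj.
Variable HH : (V -> V -> Prop) -> Prop.
Local Notation hp := (hp adj).
Local Notation sameside := (sameside adj).
Local Notation collapse := (collapse adj HH).

Lemma hyperplane_hp a b : adj a b -> hyperplane adj (hp a b).
Proof. by move=> ab; exists a, b. Qed.

Lemma hp_sym a b x y : adj a b -> hp a b x y -> hp a b y x.
Proof.
move=> ab h; have xy := hp_adj Hmg ab h.
by apply: rst_trans h _; apply: rst_step; right.
Qed.

Lemma hp_eq a b x y : hp a b x y -> hp x y = hp a b.
Proof.
move=> h; apply: funext => x'; apply: funext => y'; apply: propext.
by split=> h'; [apply: rst_trans h h' | apply: rst_trans (rst_sym _ _ _ _ h) h'].
Qed.

Lemma hyperplane_eq H x y : hyperplane adj H -> H x y -> H = hp x y.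
Proof. by case=> a [b [ab ->]] /hp_eq ->. Qed.

Lemma hyperplane_sym H x y : hyperplane adj H -> H x y -> H y x.
Proof. by case=> a [b [ab ->]]; apply: hp_sym. Qed.

Lemma sameside_refl H x : sameside H x x.
Proof. by exists 0; apply: walk0. Qed.

Lemma sameside_trans H x y z : sameside H x y -> sameside H y z -> sameside H x z.
Proof. by move=> [k hk] [l hl]; exists (k + l); apply: walk_cat hk hl. Qed.

Lemma sameside_sym H x y : hyperplane adj H -> sameside H x y -> sameside H y x.
Proof.
move=> hH [k hk]; exists k; apply: walk_rev hk => a b [ab nH].
split; first exact: (adj_sym Hmg ab).
by move/(hyperplane_sym hH).
Qed.

Lemma sameside_edge H x y : adj x y -> ~ H x y -> sameside H x y.
Proof. by move=> xy nH; exists 1; apply: walkS (walk0 _ _). Qed.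

Lemma sameside_path H (v : nat -> V) i j : i <= j ->
  (forall l, i <= l < j -> adj (v l) (v l.+1) /\ ~ H (v l) (v l.+1)) ->
  sameside H (v i) (v j).
Proof.
elim: j => [|j IH] ij hv.
  have -> : i = 0 by lia.
  exact: sameside_refl.
case: (ltngtP i j.+1) ij => // [lt|->] _; last exact: sameside_refl.
have [vj nH] := hv j ltac:(lia).
apply: sameside_trans (IH _ _) (sameside_edge vj nH); first by lia.
by move=> l hl; apply: hv; lia.
Qed.

Lemma walk_separating_finite x y k : walk adj x y k ->
  exists l : list (V -> V -> Prop),
    forall K, hyperplane adj K -> ~ sameside K x y -> List.In K l.
Proof.
elim=> [a|a b c k' ab _ [l hl]]; first by exists nil => K _ []; apply: sameside_refl.
exists (hp a b :: l) => K hK nss; case: (pselect (K a b)) => [Kab|nKab].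
  by left; rewrite (hyperplane_eq hK Kab).
by right; apply: hl => // bc; apply: nss; apply: sameside_trans (sameside_edge ab nKab) bc.
Qed.

Lemma collapse_not_kept K z : ~ kept adj HH K -> collapse z K = (fun _ => False).
Proof. by move=> nk; apply: funext => y; apply: propext; split=> // -[]. Qed.

Lemma Yvert_collapse z : Yvert adj HH (collapse z).
Proof.
split.
- by move=> K; apply: collapse_not_kept.
- move=> K kK; exists z; apply: funext => y; apply: propext.
  by rewrite /collapse; tauto.
- by move=> K K' kK kK'; exists z; split; split=> //; apply: sameside_refl.
- move=> z'; have [k w] := connected_walk Hmg z z'.
  have [l hl] := walk_separating_finite (elimT (asboolP _) w).
  by exists l => K [hK nHK] nc; apply: hl => // ss; apply: nc.
Qed.

Lemma collapse_edge_eq a b K : adj a b -> K <> hp a b -> collapse a K = collapse b K.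
Proof.
move=> ab nK; apply: funext => y; apply: propext; rewrite /collapse.
have sab K' : hyperplane adj K' -> K' <> hp a b -> sameside K' a b.
  by move=> hK' nK'; apply: (sameside_edge ab) => /(hyperplane_eq hK').
split=> -[[hK nHK] h]; split=> //.
- exact: sameside_trans (sameside_sym hK (sab _ hK nK)) h.
- exact: sameside_trans (sab _ hK nK) h.
Qed.

Lemma collapse_edge a b : adj a b ->
  collapse a = collapse b \/ Yadj adj HH (collapse a) (collapse b).
Proof.
move=> ab; case: (pselect (collapse a = collapse b)) => [|ne]; [by left | right].
have ne_ab : collapse a (hp a b) <> collapse b (hp a b).
  move=> e; apply: ne; apply: funext => K.
  by case: (pselect (K = hp a b)) => [-> //|]; apply: collapse_edge_eq.
split; try exact: Yvert_collapse.
exists (hp a b); split=> //; last by move=> K; apply: collapse_edge_eq.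
by apply: contrapT => nk; apply: ne_ab; rewrite !collapse_not_kept.
Qed.

Lemma collapse_walk z1 z2 k : walk adj z1 z2 k ->
  exists2 m, m <= k & walk (Yadj adj HH) (collapse z1) (collapse z2) m.
Proof.
elim=> [x|x y z k' xy _ [m mk w]]; first by exists 0 => //; apply: walk0.
case: (collapse_edge xy) => [->|h]; first by exists m => //; lia.
by exists m.+1; [lia | apply: walkS h w].
Qed.

Lemma Ywalk_separated_le (g : nat -> (V -> V -> Prop)) s t m :
  walk (Yadj adj HH) s t m -> forall I : seq nat, uniq I -> {in I &, injective g} ->
  (forall i, i \in I -> s (g i) <> t (g i)) -> size I <= m.
Proof.
elim=> [x|x y z k [_ _ [K0 [_ _ xy]]] _ IH] I uI injI sep.
  by case: I uI injI sep => [//|i I'] _ _ /(_ i (mem_head _ _)).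
have sepK i : i \in I -> g i <> K0 -> y (g i) <> z (g i).
  by move=> iI /xy <-; apply: sep.
case: (pselect (exists2 i, i \in I & g i = K0)) => [[i iI gi] | noK0].
  have : size (rem i I) <= k.
    apply: IH; first exact: rem_uniq.
    - by move=> j j' /mem_rem jI /mem_rem j'I; apply: injI.
    - move=> j; rewrite mem_rem_uniq // => /andP[ji jI]; apply: sepK => // gj.
      by move/eqP: ji; apply; apply: injI => //; rewrite gj gi.
  by rewrite size_rem //; case: (I) iI.
by apply: leqW; apply: IH => // j jI; apply: sepK => // gj; apply: noK0; exists j.
Qed.

End Collapse.

Lemma count_runs_le (P : pred nat) n d :
  (forall a b, a <= b <= d -> (forall l, a <= l < b -> ~~ P l) -> b - a <= n) ->
  d <= n + n.+1 * count P (iota 0 d).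
Proof.
move=> short_runs.
suff [r [rd run bound]] : exists r, [/\ r <= d, forall l, d - r <= l < d -> ~~ P l &
    d <= r + n.+1 * count P (iota 0 d)].
  by have := short_runs (d - r) d ltac:(lia) run; lia.
elim: d short_runs => [|d IH] short_runs; first by exists 0; split=> // l; lia.
have [r [rd run bound]] := IH (fun a b ab => short_runs a b ltac:(lia)).
have rn : r <= n by have := short_runs (d - r) d ltac:(lia) run; lia.
have cnt : count P (iota 0 d.+1) = count P (iota 0 d) + P d.
  by rewrite -addn1 iotaD count_cat /= addn0.
rewrite cnt; case Pd: (P d).
  by exists 0; split=> [//| l /andP[? ?] | ]; lia.
exists r.+1; split=> [|l /andP[dl ld]|]; [lia | | lia].
case: (ltnP l d) => [lt|dl']; first by apply: run; lia.
have -> : l = d by lia.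
by rewrite Pd.
Qed.

Section GroupAction.
Variable G : group.
Implicit Types x y : G.

Lemma gmulxV x : gmul x (ginv x) = gone G.
Proof.
rewrite -{1}(gmul1 (gmul x (ginv x))) -(gmulV (ginv x)) -gmulA.
by rewrite (gmulA (ginv x)) gmulV gmul1.
Qed.

Lemma gmulx1 x : gmul x (gone G) = x.
Proof. by rewrite -(gmulV x) gmulA gmulxV gmul1. Qed.

Lemma ginv_uniq x y : gmul y x = gone G -> y = ginv x.
Proof. by move=> yx; rewrite -(gmulx1 y) -(gmulxV x) gmulA yx gmul1. Qed.

Lemma ginvM x y : ginv (gmul x y) = gmul (ginv y) (ginv x).
Proof.
by symmetry; apply: ginv_uniq; rewrite -gmulA (gmulA (ginv x)) gmulV gmul1 gmulV.
Qed.

Lemma ginv1 : ginv (gone G) = gone G.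
Proof. by symmetry; apply: ginv_uniq; rewrite gmul1. Qed.

Variables (V : Type) (act : G -> V -> V).
Hypothesis Hact : is_action act.

Lemma htransM x y H : htrans act (gmul x y) H = htrans act x (htrans act y H).
Proof. by apply: funext => a; apply: funext => b; rewrite /htrans ginvM !(proj2 Hact). Qed.

Lemma htrans1 H : htrans act (gone G) H = H.
Proof. by apply: funext => a; apply: funext => b; rewrite /htrans ginv1 !(proj1 Hact). Qed.

Lemma htransMV x y H : htrans act (gmul y (ginv x)) (htrans act x H) = htrans act y H.
Proof. by rewrite htransM -(htransM (ginv x)) gmulV htrans1. Qed.

End GroupAction.

Lemma edge_cube V (adj : V -> V -> Prop) a b : adj a b -> adj b a -> ~ adj a a -> ~ adj b b ->
  cube adj (fun w => w = a \/ w = b).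
Proof.
move=> ab ba naa nbb; have nab : a <> b by move=> e; subst.
exists 1, (fun u : {ffun 'I_1 -> bool} => if u ord0 then b else a); split.
- move=> u u' /= e; apply/ffunP => i; rewrite (ord1 i).
  by move: e; case: (u ord0); case: (u' ord0) => // e; exfalso; apply: nab.
- move=> v; split.
  + by case=> ->; [exists [ffun => false] | exists [ffun => true]]; rewrite ffunE.
  + by case=> u <-; case: (u ord0); [right | left].
- move=> u u'.
  have -> : [set i | u i != u' i] = if u ord0 != u' ord0 then setT else set0.
    by apply/setP => i; rewrite (ord1 i) inE; case: (u ord0 != u' ord0); rewrite inE.
  by case: (u ord0); case: (u' ord0); rewrite /= ?cards0 ?cardsT ?card_ord.
Qed.

Section LowerBound.
Variables (V : Type) (adj : V -> V -> Prop) (G : group) (act : G -> V -> V).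
Variables (HH : (V -> V -> Prop) -> Prop) (n : nat) (reps : 'I_n -> (V -> V -> Prop)).
Hypothesis Hmg : median_graph adj.
Hypothesis Hact : is_action act.
Hypothesis Hcol : strongly_collapsible adj act HH.
Hypothesis Hcov : forall H, HH H -> exists i g, H = htrans act g (reps i).
Local Notation dist := (dist Hmg).
Local Notation hp := (hp adj).
Local Notation sameside := (sameside adj).
Local Notation collapse := (collapse adj HH).

Section Geodesic.
Variables (d : nat) (v : nat -> V).
Hypothesis hv : forall i, i < d -> adj (v i) (v i.+1).
Hypothesis hd : dist (v 0) (v d) = d.
Local Notation crossed l := (hp (v l) (v l.+1)).

Lemma geodesic_dist p q : p <= q <= d -> dist (v p) (v q) = q - p.
Proof.
move=> /andP[pq qd]; have sub := vertices_walk hv.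
have := dist_min Hmg (sub p q ltac:(lia)); have := dist_min Hmg (sub 0 p ltac:(lia)).
have := dist_min Hmg (sub q d ltac:(lia)).
have := dist_triangle Hmg (v 0) (v p) (v d); have := dist_triangle Hmg (v p) (v q) (v d).
lia.
Qed.

Lemma crossed_inj i j : i < d -> j < d -> crossed i = crossed j -> i = j.
Proof.
wlog ij : i j / i < j.
  move=> hw id jd e; case: (ltngtP i j) => [lt | lt | //]; first exact: hw.
  by apply: esym; apply: hw => //; rewrite e.
move=> _ jd e; exfalso.
have : hp (v i) (v i.+1) (v j) (v j.+1) by rewrite e; apply: rst_refl.
move/(crst_same_cut Hmg) => [cut | cut]; [move: (cut (v i.+1)) | move: (cut (v 0))];
  rewrite /closer /= ?(distC Hmg (v i.+1) (v i)) !geodesic_dist; lia.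
Qed.

Lemma crossed_separates l : l < d -> ~ sameside (crossed l) (v 0) (v d).
Proof.
move=> ld [k w].
have W0 : closer Hmg (v l, v l.+1) (v 0) by rewrite /closer /= !geodesic_dist; lia.
have Wd : ~~ closer Hmg (v l, v l.+1) (v d).
  by rewrite /closer /= !(distC Hmg (v d)) !geodesic_dist; lia.
have [u [x [[ux nH] Wu Wx]]] := walk_exit w W0 Wd.
exact: nH (crossing_edge_hp (hv ld) ux Wu Wx).
Qed.

Lemma collapse_crossed_neq l : l < d -> ~ HH (crossed l) ->
  collapse (v 0) (crossed l) <> collapse (v d) (crossed l).
Proof.
move=> ld nHH e; have hyp := hyperplane_hp (hv ld).
have : collapse (v 0) (crossed l) (v 0) by split; [split | apply: sameside_refl].
rewrite e => -[_ /(sameside_sym Hmg hyp)]; exact: crossed_separates.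
Qed.

Lemma carrier_crossed l : l < d ->
  carrier adj (crossed l) (v l) /\ carrier adj (crossed l) (v l.+1).
Proof.
move=> ld; have vl := hv ld.
have edge : cube adj (fun w => w = v l \/ w = v l.+1).
  by apply: edge_cube => //; [apply: adj_sym | apply: adj_irr | apply: adj_irr].
have crosses : exists x y, [/\ x = v l \/ x = v l.+1, y = v l \/ y = v l.+1 & crossed l x y].
  by exists (v l), (v l.+1); split; [left | right | apply: rst_refl].
by split; exists (fun w => w = v l \/ w = v l.+1); split; auto.
Qed.

Lemma collapsed_run_no_translate i j : i < j < d ->
  (forall l, i <= l <= j -> HH (crossed l)) -> forall g, htrans act g (crossed i) <> crossed j.
Proof.
move=> /andP[ij jd] runHH g eg.
apply: (Hcol (H := crossed i) (g := g)); first by apply: runHH; lia.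
  by rewrite eg => /crossed_inj; lia.
(* A hyperplane of Sep is crossed by the geodesic between v i.+1 and v j. *)
rewrite eg => K [hK [x [y [nxy cx cy]]]]; apply: contrapT => nHK; apply: nxy.
have sx := cx (v i.+1) (carrier_crossed (ltn_trans ij jd)).2.
have sy := cy (v j) (carrier_crossed jd).1.
apply: sameside_trans sx (sameside_trans _ (sameside_sym Hmg hK sy)).
apply: sameside_path => [|l hl]; first lia.
split; first by apply: hv; lia.
by move=> Kl; apply: nHK; rewrite (hyperplane_eq hK Kl); apply: runHH; lia.
Qed.

Lemma collapsed_run_le a b : a <= b <= d -> (forall l, a <= l < b -> HH (crossed l)) -> b - a <= n.
Proof.
move=> /andP[ab bd] runHH; case: (ltnP a b) => [ltab | ba]; last lia.
have [k0 _] := Hcov (runHH a ltac:(lia)).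
pose orbit_of l := odflt k0 [pick k | `[< exists g, crossed l = htrans act g (reps k) >]].
have orbit_ofP l : a <= l < b -> exists g, crossed l = htrans act g (reps (orbit_of l)).
  move=> hl; rewrite /orbit_of; case: pickP => [k /asboolP // | none].
  have [k [g e]] := Hcov (runHH l hl).
  by move/negbT/asboolPn: (none k) => []; exists g.
have orbit_of_neq p q : a <= p -> p < q < b -> orbit_of p <> orbit_of q.
  move=> ap /andP[pq qb] E.
  have [g1 e1] := orbit_ofP p ltac:(lia); have [g2 e2] := orbit_ofP q ltac:(lia).
  apply: (collapsed_run_no_translate (i := p) (j := q) _ _ (g := gmul g2 (ginv g1))).
  - by lia.
  - by move=> l hl; apply: runHH; lia.
  - by rewrite e1 e2 E htransMV.
have orbit_of_inj : injective (fun i : 'I_(b - a) => orbit_of (a + i)).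
  move=> i i' /= E; apply: val_inj => /=; have := ltn_ord i; have := ltn_ord i'.
  case: (ltngtP i i') => // lt hi' hi; exfalso.
  - by apply: (orbit_of_neq (a + i) (a + i')) => //; lia.
  - by apply: (orbit_of_neq (a + i') (a + i)) => //; lia.
by have := leq_card _ orbit_of_inj; rewrite !card_ord.
Qed.

Lemma geodesic_le_Ywalk m : walk (Yadj adj HH) (collapse (v 0)) (collapse (v d)) m ->
  d <= n + n.+1 * m.
Proof.
move=> wy; pose kept_l l := `[< ~ HH (crossed l) >].
have runs : d <= n + n.+1 * count kept_l (iota 0 d).
  apply: count_runs_le => a b abd run; apply: collapsed_run_le => // l hl.
  by apply: contrapT; move/asboolPn: (run l hl).
have kept_le : count kept_l (iota 0 d) <= m.
  rewrite -size_filter; apply: (Ywalk_separated_le (g := fun l => crossed l) wy).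
  - exact/filter_uniq/iota_uniq.
  - move=> i j; rewrite !mem_filter !mem_iota => /andP[_ hi] /andP[_ hj].
    by apply: crossed_inj; lia.
  - move=> i; rewrite mem_filter mem_iota => /andP[/asboolP nHH hi].
    by apply: collapse_crossed_neq => //; lia.
by apply: leq_trans runs _; rewrite leq_add2l leq_mul2l kept_le orbT.
Qed.

End Geodesic.

Lemma gdist_le_Ywalk z1 z2 dz m : gdist adj z1 z2 dz ->
  walk (Yadj adj HH) (collapse z1) (collapse z2) m -> dz <= n + n.+1 * m.
Proof.
move=> gz; have [v [v0 vd hv]] := walk_vertices gz.1; subst z1 z2.
by apply: geodesic_le_Ywalk => //; rewrite -(gdist_dist Hmg gz).
Qed.

End LowerBound.

Theorem lemma3p9 (V : Type) (adj : V -> V -> Prop) (G : group)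
    (act : G -> V -> V) (HH : (V -> V -> Prop) -> Prop) (n : nat) :
  median_graph adj ->
  is_action act -> by_isometries adj act -> no_cube_inversions adj act ->
  (forall H, HH H -> hyperplane adj H) ->
  G_invariant act HH -> strongly_collapsible adj act HH ->
  n_orbits act HH n ->
  (forall z1 z2 dz, gdist adj z1 z2 dz ->
     exists dy, [/\ gdist (Yadj adj HH) (collapse adj HH z1) (collapse adj HH z2) dy,
                    ((dz%:Q - n%:Q) / (n.+1)%:Q <= dy%:Q)%R & dy <= dz])
  /\ (forall z1 z2 dz, collapse adj HH z1 = collapse adj HH z2 ->
        gdist adj z1 z2 dz -> dz <= n).
Proof.
move=> Hmg Hact _ _ _ _ Hcol [reps [_ _ Hcov]].
have dist_le := gdist_le_Ywalk Hmg Hact Hcol Hcov.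
split=> [z1 z2 dz gz | z1 z2 dz e gz]; last first.
  by have := dist_le _ _ _ 0 gz; rewrite e muln0 addn0; apply; apply: walk0.
have [m mdz wy] := collapse_walk Hmg HH gz.1.
have [dy gy] := gdist_exists wy.
exists dy; split=> //; last exact: leq_trans (gy.2 _ wy) mdz.
have : (dz%:Q <= n%:Q + (n.+1)%:Q * dy%:Q)%R.
  by rewrite -natrM -natrD ler_nat; apply: dist_le gz gy.1.
by rewrite ler_pdivrMr ?ltr0n //; lra.
Qed.
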